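(* Let $N\ge1$ and let $F=(f_1,\ldots,f_N):\{0,1\}^N\to\{0,1\}^N$ be a synchronously updated linear Boolean network, where each $f_i(\mathbf x)=\sum_{j\in S_i}x_j \pmod 2$ for a subset $S_i\subseteq\{1,\dots,N\}$ of size $n_i$ (the in-degree of node $i$). For $1\le m\le N$, let $(\mathbf x,\mathbf y)$ be a uniformly random pair of states in $\{0,1\}^N$ with Hamming distance $d(\mathbf x,\mathbf y)=m$. Then $$D(F,m) := \mathbb{E}\Big[d\big(F(\mathbf x),F(\mathbf y)\big) \ \big| \ d(\mathbf x,\mathbf y) = m\Big] = \sum_{i=1}^N\mathbb{P}\left(f_i(\mathbf x) \neq f_i(\mathbf y) \ \big| \ d(\mathbf x,\mathbf y) =m \right) = \sum_{i=1}^N \sum_{\substack{1\le c\le m\\ c\text{ odd}}} H_{N,m,n_i}(c),$$ where $$H_{N,m,n_i}(c) = \frac{\binom mc \binom{N-m}{n_i-c}}{\binom N{n_i}} = \frac{\binom {n_i}c \binom{N-n_i}{m-c}}{\binom N{m}}$$ is the hypergeometric probability mass function.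
   Context: $d(\cdot,\cdot)$ denotes Hamming distance on $\{0,1\}^N$. Binomial coefficients $\binom ab$ are taken to be $0$ when $b<0$ or $b>a$. The quantity $D(F,m)$ is called the Derrida value of $F$ at $m$. *)

From mathcomp Require Import all_boot all_order all_algebra.
Set Implicit Arguments. Unset Strict Implicit. Unset Printing Implicit Defensive.
Import Order.TTheory GRing.Theory Num.Theory.

Definition state (N : nat) := {ffun 'I_N -> bool}.

Definition hamming N (x y : state N) : nat := #|[set i | x i != y i]|.

Definition linear_net N (S : 'I_N -> {set 'I_N}) (x : state N) : state N :=
  [ffun i => \big[addb/false]_(j in S i) x j].

(* All ordered pairs of states at Hamming distance m (uniform distribution). *)
Definition pairs_at N (m : nat) : {set state N * state N} :=
  [set p | hamming p.1 p.2 == m].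

Definition derrida N (F : state N -> state N) (m : nat) : rat :=
  ((\sum_(p in pairs_at N m) (hamming (F p.1) (F p.2))%:R)
     / (#|pairs_at N m|)%:R)%R.

Definition node_flip_prob N (F : state N -> state N) (i : 'I_N) (m : nat) : rat :=
  ((#|[set p in pairs_at N m | F p.1 i != F p.2 i]|)%:R
     / (#|pairs_at N m|)%:R)%R.

(* Binomial coefficient with integer lower index, 0 when b < 0 (and, as usual
   for 'C, when b > a). *)
Definition binz (a : nat) (b : int) : nat :=
  match b with Posz k => 'C(a, k) | Negz _ => 0 end.

Definition hyper1 (N m n c : nat) : rat :=
  ((binz m c * binz (N - m) (n%:Z - c%:Z))%:R / ('C(N, n))%:R)%R.

Definition hyper2 (N m n c : nat) : rat :=
  ((binz n c * binz (N - n) (m%:Z - c%:Z))%:R / ('C(N, m))%:R)%R.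

From mathcomp Require Import all_boot all_order all_algebra zify ring.
Import Order.TTheory GRing.Theory Num.Theory.
Set Implicit Arguments. Unset Strict Implicit.

(* Node i of a linear network flips iff an odd number of the coordinates where
   x and y differ lie in S_i.  A pair (x, y) is determined by x and the set D of
   its differing coordinates, so under the uniform law on pairs at distance m,
   D is a uniform m-subset; the flip probability of node i is thus the
   probability that a uniform m-subset meets the #|S_i|-set S_i in an odd number
   of points, a sum of hypergeometric probabilities.  The Derrida value is the
   sum of these by linearity of expectation.  The two forms of the
   hypergeometric pmf agree because, cleared of denominators, both equal the
   multinomial coefficient N! / (c! (m-c)! (n-c)! (N-m-n+c)!). *)

Lemma card_set_sum (T : finType) (P : pred T) : #|[set x | P x]| = \sum_x P x.
Proof.
by rewrite -sum1dep_card big_mkcond /=; apply: eq_bigr => x _; case: (P x).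
Qed.

Lemma big_addb_odd (T : finType) (A : {pred T}) (b : pred T) :
  \big[addb/false]_(j in A) b j = odd #|[set j in A | b j]|.
Proof.
rewrite card_set_sum (big_morph odd oddD (erefl (odd 0))) big_mkcond /=.
by apply: eq_bigr => j _; case: (j \in A); case: (b j).
Qed.

Lemma card_odd_fibers (T : finType) (P : pred T) (k : T -> nat) (m : nat) :
  (forall x, P x -> k x <= m) ->
  #|[set x | P x && odd (k x)]|
    = \sum_(1 <= c < m.+1 | odd c) #|[set x | P x && (k x == c)]|.
Proof.
move=> le_km; rewrite card_set_sum.
under [RHS]eq_bigr do rewrite card_set_sum.
rewrite exchange_big /=; apply: eq_bigr => x _.
case: (boolP (P x)) => [Px | _] /=; last by rewrite big1.
case: (posnP (k x)) => [-> | kx_gt0]; first by rewrite big1 // => -[].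
rewrite big_mkcond (bigD1_seq (k x)) ?iota_uniq //=; last first.
  by rewrite mem_index_iota kx_gt0 ltnS le_km.
rewrite eqxx big1 ?addn0; first by case: odd.
by move=> c /negPf; rewrite eq_sym => ->; case: odd.
Qed.

Lemma card_set_ord_le N (A : {set 'I_N}) : #|A| <= N.
Proof. by rewrite -[X in _ <= X]card_ord max_card. Qed.

Section PairsByFiber.

Variables (T U : finType) (f : T -> T -> U) (g : T -> U -> T).
Hypotheses (fK : forall x, cancel (f x) (g x)) (gK : forall x, cancel (g x) (f x)).

Lemma card_pairs_by_fiber (P : pred U) :
  #|[set p : T * T | P (f p.1 p.2)]| = #|T| * #|[set u | P u]|.
Proof.
pose h (p : T * T) := (p.1, f p.1 p.2).
transitivity #|h @^-1: setX [set: T] [set u | P u]|.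
  by apply: eq_card => p; rewrite !inE.
rewrite on_card_preimset ?cardsX ?cardsT //.
exists (fun q => (q.1, g q.1 q.2)) => [[x y] | [x u]] _;
  by rewrite /h /= ?fK ?gK.
Qed.

End PairsByFiber.

Definition diffset N (x y : state N) : {set 'I_N} := [set i | x i != y i].

Definition xorset N (x : state N) (D : {set 'I_N}) : state N :=
  [ffun i => x i (+) (i \in D)].

Lemma diffsetK N (x : state N) : cancel (diffset x) (xorset x).
Proof.
by move=> y; apply/ffunP => i; rewrite ffunE inE; case: (x i); case: (y i).
Qed.

Lemma xorsetK N (x : state N) : cancel (xorset x) (diffset x).
Proof.
by move=> D; apply/setP => i; rewrite !inE ffunE; case: (x i); case: (i \in D).
Qed.

Lemma card_pairs_diffset N (P : pred {set 'I_N}) :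
  #|[set p : state N * state N | P (diffset p.1 p.2)]|
    = 2 ^ N * #|[set D | P D]|.
Proof.
rewrite (card_pairs_by_fiber (@diffsetK N) (@xorsetK N)).
by rewrite card_ffun card_bool card_ord.
Qed.

Lemma linear_net_neq N (S : 'I_N -> {set 'I_N}) (x y : state N) (i : 'I_N) :
  (linear_net S x i != linear_net S y i) = odd #|diffset x y :&: S i|.
Proof.
have neq_addb (a b : bool) : (a != b) = a (+) b by case: a; case: b.
rewrite !ffunE neq_addb -big_split big_addb_odd /=.
congr (odd _); apply: eq_card => j; rewrite !inE.
by case: (j \in S i); case: (x j); case: (y j).
Qed.

Lemma card_draws_setI (T : finType) (S : {set T}) (m c : nat) : c <= m ->
  #|[set D : {set T} | (#|D| == m) && (#|D :&: S| == c)]|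
    = 'C(#|S|, c) * 'C(#|~: S|, m - c).
Proof.
move=> le_cm.
pose parts (D : {set T}) := (D :&: S, D :\: S).
pose R := setX [set A : {set T} | A \subset S & #|A| == c]
               [set B : {set T} | B \subset ~: S & #|B| == m - c].
transitivity #|parts @^-1: R|.
  apply: eq_card => D; rewrite !inE subsetIr -[#|D|](cardsID S D) /=.
  have -> : D :\: S \subset ~: S by rewrite setDE subsetIr.
  apply/andP/and3P => [[/eqP sum_m /eqP cap_c] | [/eqP cap_c _ /eqP diff_c]].
    by split=> //; apply/eqP; lia.
  by split; apply/eqP; lia.
rewrite on_card_preimset; first by rewrite cardsX !cards_draws.
exists (fun q => q.1 :|: q.2) => [D _ | [A B]]; first exact: setID.
rewrite !inE /= => /andP[/andP[/subsetP sAS _] /andP[/subsetP sBS _]].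
congr pair; apply/setP => j; have /implyP := sAS j; have /implyP := sBS j;
  by rewrite !inE; case: (j \in A); case: (j \in B); case: (j \in S).
Qed.

Lemma bin_split_fact (N m c k : nat) : c <= m -> m <= N -> k <= N - m ->
  'C(N, m) * 'C(m, c) * 'C(N - m, k) * (c`! * (m - c)`! * (k`! * (N - m - k)`!))
    = N`!.
Proof.
move=> le_cm le_mN le_k.
by rewrite -(bin_fact le_mN) -(bin_fact le_cm) -(bin_fact le_k); ring.
Qed.

Lemma bin_hypergeometric_sym (N m n c : nat) :
  m <= N -> n <= N -> c <= m -> c <= n ->
  'C(m, c) * 'C(N - m, n - c) * 'C(N, m) = 'C(n, c) * 'C(N - n, m - c) * 'C(N, n).
Proof.
move=> le_mN le_nN le_cm le_cn.
have [le_nc | lt_nc] := leqP (n - c) (N - m); last first.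
  have lt_mc : N - n < m - c by lia.
  by rewrite (bin_small lt_nc) (bin_small lt_mc) !muln0 !mul0n.
have le_mc : m - c <= N - n by lia.
pose K := c`! * (m - c)`! * ((n - c)`! * (N - m - (n - c))`!).
have K_sym : K = c`! * (n - c)`! * ((m - c)`! * (N - n - (m - c))`!).
  by rewrite /K (_ : N - n - (m - c) = N - m - (n - c)); [ring | lia].
apply/eqP; rewrite -(eqn_pmul2r (_ : 0 < K)); last by rewrite !muln_gt0 !fact_gt0.
apply/eqP; transitivity N`!.
  by rewrite /K -(bin_split_fact le_cm le_mN le_nc); ring.
by rewrite K_sym -(bin_split_fact le_cn le_nN le_mc); ring.
Qed.

Lemma binz_subn (a n c : nat) :
  binz a (n%:Z - c%:Z) = if c <= n then 'C(a, n - c) else 0.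
Proof.
case: leqP => [le_cn | lt_nc]; first by rewrite subzn.
have cn_gt0 : 0 < c - n by rewrite subn_gt0.
by rewrite -opprB (subzn (ltnW lt_nc)) -(prednK cn_gt0) -NegzE.
Qed.

Lemma hyper1_hyper2 (N m n c : nat) : m <= N -> n <= N -> c <= m ->
  hyper1 N m n c = hyper2 N m n c.
Proof.
move=> le_mN le_nN le_cm; rewrite /hyper1 /hyper2 /= !binz_subn le_cm.
case: (leqP c n) => [le_cn | lt_nc]; last first.
  by rewrite (bin_small lt_nc) muln0 mul0n !mul0r.
have bin_neq0 k : k <= N -> ('C(N, k)%:R != 0 :> rat)%R.
  by move=> le_kN; rewrite pnatr_eq0 -lt0n bin_gt0.
apply/eqP; rewrite eqr_div ?bin_neq0 // -!natrM.
by rewrite bin_hypergeometric_sym.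
Qed.

Lemma derrida_sum_node_flip_prob N (F : state N -> state N) (m : nat) :
  derrida F m = (\sum_(i < N) node_flip_prob F i m)%R.
Proof.
rewrite /derrida /node_flip_prob -mulr_suml -!natr_sum; congr (_%:R / _)%R.
under eq_bigr do rewrite /hamming card_set_sum.
under [RHS]eq_bigr do rewrite card_set_sum.
rewrite exchange_big /=; apply: eq_bigr => i _.
by rewrite big_mkcond /=; apply: eq_bigr => p _; case: (p \in pairs_at N m).
Qed.

Lemma node_flip_prob_linear_net N (S : 'I_N -> {set 'I_N}) (i : 'I_N) (m : nat) :
  m <= N ->
  node_flip_prob (linear_net S) i m
    = (\sum_(1 <= c < m.+1 | odd c) hyper1 N m #|S i| c)%R.
Proof.
move=> le_mN.
have pairsE : pairs_at N m = [set p | #|diffset p.1 p.2| == m].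
  by apply/setP => p; rewrite !inE.
have flipsE : [set p in pairs_at N m | linear_net S p.1 i != linear_net S p.2 i]
    = [set p | (#|diffset p.1 p.2| == m) && odd #|diffset p.1 p.2 :&: S i|].
  by apply/setP => p; rewrite !inE linear_net_neq.
rewrite /node_flip_prob flipsE pairsE.
rewrite (card_pairs_diffset (fun D => (#|D| == m) && odd #|D :&: S i|)).
rewrite (card_pairs_diffset (fun D => #|D| == m)) card_draws card_ord.
rewrite !natrM -mulf_div divff ?mul1r ?pnatr_eq0 ?expn_eq0 //.
rewrite (@card_odd_fibers _ _ _ m) => [|D /eqP <-]; last first.
  exact/subset_leq_card/subsetIl.
rewrite natr_sum mulr_suml big_nat_cond [RHS]big_nat_cond.
apply: eq_bigr => c /andP[/andP[_ /ltnSE le_cm] _].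
have cardC : #|~: S i| = N - #|S i|.
  by have := cardsC (S i); rewrite card_ord; lia.
rewrite hyper1_hyper2 ?card_set_ord_le // /hyper2 /= binz_subn le_cm.
by rewrite card_draws_setI // cardC.
Qed.

Theorem mainTheorem2 (N : nat) (S : 'I_N -> {set 'I_N}) (m : nat) :
  (1 <= N)%N -> (1 <= m <= N)%N ->
  [/\ derrida (linear_net S) m
        = (\sum_(i < N) node_flip_prob (linear_net S) i m)%R,
      (\sum_(i < N) node_flip_prob (linear_net S) i m)%R
        = (\sum_(i < N) \sum_(1 <= c < m.+1 | odd c) hyper1 N m #|S i| c)%R
    & forall (i : 'I_N) (c : nat), (1 <= c <= m)%N ->
        hyper1 N m #|S i| c = hyper2 N m #|S i| c].
Proof.
move=> _ /andP[_ le_mN]; split.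
- exact: derrida_sum_node_flip_prob.
- by apply: eq_bigr => i _; apply: node_flip_prob_linear_net.
- by move=> i c /andP[_ le_cm]; apply: hyper1_hyper2; rewrite ?card_set_ord_le.
Qed.
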